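(* Let $w$ be a $1$-$2$ occurrence word. Then $w$ has property (Q) if and only if one of the following holds: (1) $w$ is empty; (2) $w=w'\,a$, where $a$ is an unmatched symbol of $w$ and $w'$ has property (Q); (3) $w=w_1\,a\,w_2\,a$, where $a$ is a symbol, no unmatched symbol of $w$ occurs in $w_2$, $w_2^\circ$ has property (P), and $w_1$ has property (Q). Moreover, such a decomposition, if it exists, is unique.
   Context: A $1$-$2$ occurrence word is a finite word in which each occurring symbol occurs once or twice; symbols occurring once are unmatched, those occurring twice are matched (this is relative to the word considered, e.g. a subword $w_1$ is itself regarded as a $1$-$2$ occurrence word). $w^\circ$ is the double occurrence word obtained by deleting the unmatched symbols of $w$. For a double occurrence word $u$, $\vec\Lambda(u)$ is the directed graph on its symbols with an arc $e\to f$ whenever $e\,f\,e\,f$ is a subsequence of $u$; for a $1$-$2$ occurrence word $w$, $\vec\Lambda(w)$ means $\vec\Lambda(w^\circ)$. A sink is a vertex with no out-neighbor (a symbol ''not interlaced on the right''). An unmatched symbol $a$ is covered by a matched symbol $b$ if $b\,a\,b$ is a subsequence of $w$. Property (P): $w$ is a double occurrence word and the sinks of $\vec\Lambda(w)$ form a dominating set (every non-sink has an out-neighbor that is a sink). Property (Q): $w$ is a $1$-$2$ occurrence word, $w^\circ$ has property (P), and no unmatched symbol of $w$ is covered in $w$ by a sink of $\vec\Lambda(w)$. *)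

From mathcomp Require Import all_boot.
Set Implicit Arguments. Unset Strict Implicit. Unset Printing Implicit Defensive.

Section Words.
Variable T : eqType.
Implicit Types (w u : seq T) (a b e f : T).

Definition one_two_word w : bool := all (fun x => count_mem x w <= 2) w.

Definition double_word w : bool := all (fun x => count_mem x w == 2) w.

Definition matched w a : bool := count_mem a w == 2.
Definition unmatched w a : bool := count_mem a w == 1.

Definition circ w : seq T := filter (fun x => count_mem x w != 1) w.

(* arc e -> f in the directed interlace graph of a double occurrence word u:
   e f e f is a subsequence of u *)
Definition arc u e f : bool := subseq [:: e; f; e; f] u.

Definition sink u e : bool := (e \in u) && ~~ has (arc u e) u.

Definition propP u : bool :=
  double_word u &&
  all (fun e => ~~ sink u e ==> has (fun f => arc u e f && sink u f) u) u.

Definition covers w b a : bool := subseq [:: b; a; b] w.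

Definition propQ w : bool :=
  [&& one_two_word w, propP (circ w) &
      all (fun a => unmatched w a ==>
             ~~ has (fun b => sink (circ w) b && covers w b a) (circ w)) w].

Definition dec2 w w' a : Prop :=
  w = rcons w' a /\ unmatched w a /\ propQ w'.

Definition dec3 w w1 a w2 : Prop :=
  w = w1 ++ a :: w2 ++ [:: a] /\
  (forall x, unmatched w x -> x \notin w2) /\
  propP (circ w2) /\ propQ w1.

End Words.

From mathcomp Require Import all_boot zify.
(* Imported after all_boot, whose path.v also defines an [arc]. *)
Set Implicit Arguments. Unset Strict Implicit. Unset Printing Implicit Defensive.

(* Everything is read on w itself: a sink of the interlace graph of w° is a
   symbol matched in w with no arc in w, and (P), (Q) translate accordingly.
   If the last letter x of w = w' x is unmatched, deleting it changes no arc,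
   sink or covering, so (Q) passes between w and w'.  If x is matched, then
   w = w1 x w2 x with x in neither w1 nor w2, and x is a sink covering exactly
   the letters of w2.  A symbol lying entirely in w2 has the same arcs and sink
   status in w as in w2; a symbol split between w1 and w2 has an arc to x; a
   symbol b lying entirely in w1 has its arcs of w1 plus an arc to every letter
   of w2 that it covers in w1.  Such letters are unmatched in w1, so when no
   sink of w1 covers an unmatched letter, the sinks of w1 stay sinks of w, and
   (Q) for w splits into the three conditions on w1 and w2.  Uniqueness: the
   last letter fixes the type of the decomposition and, in type (3), the first
   occurrence of a fixes w1 and w2. *)

Section Subsequences.
Variable T : eqType.
Implicit Types (p s : seq T) (y : T).

Lemma mem_count_gt0 y s : (y \in s) = (0 < count_mem y s).
Proof. by rewrite -has_pred1 has_count. Qed.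

Lemma subseq_cat_dropl y p s1 s2 : y \notin s1 ->
  subseq (y :: p) (s1 ++ s2) -> subseq (y :: p) s2.
Proof.
elim: s1 => //= z s1 IH; rewrite inE negb_or => /andP[yz ys1].
by rewrite (negbTE yz); apply: IH.
Qed.

Lemma subseq_cat_dropr y p s1 s2 : y \notin s2 ->
  subseq (rcons p y) (s1 ++ s2) -> subseq (rcons p y) s1.
Proof.
rewrite -mem_rev -[subseq _ (s1 ++ s2)]subseq_rev -[subseq _ s1]subseq_rev.
by rewrite rev_cat rev_rcons; apply: subseq_cat_dropl.
Qed.

Lemma cat_pair_rcons y p s : p ++ y :: s ++ [:: y] = rcons (p ++ y :: s) y.
Proof. by rewrite rcons_cat /= -cats1. Qed.

End Subsequences.

Section Interlacing.
Variable T : eqType.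
Implicit Types (u w v : seq T) (a b e f y : T).

Lemma one_two_wordP w : reflect (forall y, count_mem y w <= 2) (one_two_word w).
Proof.
apply: (iffP allP) => [le2 y|le2 y _]; last exact: le2.
by case: (boolP (y \in w)) => [/le2 //|/count_memPn ->].
Qed.

Lemma one_two_word_subseq u w : subseq u w -> one_two_word w -> one_two_word u.
Proof.
move=> uw /one_two_wordP le2; apply/one_two_wordP => y.
exact: leq_trans (leq_count_subseq _ uw) (le2 y).
Qed.

Lemma arc_count w e f : arc w e f -> 1 < count_mem e w /\ 1 < count_mem f w.
Proof.
move=> ef; have := leq_count_subseq (pred1 e) ef.
have := leq_count_subseq (pred1 f) ef => /=; rewrite !eqxx.
by case: (e == f); case: (f == e) => /= ? ?; split; lia.
Qed.

Lemma arc_matched w e f : one_two_word w -> arc w e f -> matched w e /\ matched w f.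
Proof.
move=> /one_two_wordP le2 /arc_count[]; rewrite /matched.
by have := le2 e; have := le2 f; split; lia.
Qed.

Lemma arc_mem w e f : arc w e f -> f \in w.
Proof. by case/arc_count=> _; rewrite mem_count_gt0; lia. Qed.

Lemma arc_subseq u w e f : subseq u w -> arc u e f -> arc w e f.
Proof. by move=> uw ef; apply: subseq_trans uw. Qed.

Lemma covers_subseq u w b a : subseq u w -> covers u b a -> covers w b a.
Proof. by move=> uw ba; apply: subseq_trans uw. Qed.

Lemma covers_mem w b a : covers w b a -> a \in w.
Proof. by move/mem_subseq; apply; rewrite !inE eqxx orbT. Qed.

Lemma has_arcP w e : reflect (exists f, arc w e f) (has (arc w e) w).
Proof.
apply: (iffP hasP) => [[f _ ef]|[f ef]]; exists f => //; exact: arc_mem ef.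
Qed.

Definition wsink w e := matched w e && ~~ has (arc w e) w.

Lemma wsinkP w e : reflect (matched w e /\ forall f, ~~ arc w e f) (wsink w e).
Proof.
apply: (iffP andP) => -[m noarc]; split=> //.
  by move=> f; apply: contra noarc => ef; apply/has_arcP; exists f.
by apply/has_arcP => -[f]; apply/negP/noarc.
Qed.

Lemma matched_mem w b : matched w b -> b \in w.
Proof. by move=> /eqP b2; rewrite mem_count_gt0 b2. Qed.

Lemma wsink_mem w b : wsink w b -> b \in w.
Proof. by case/andP=> /matched_mem. Qed.

Lemma unmatched_mem w a : unmatched w a -> a \in w.
Proof. by move=> /eqP a1; rewrite mem_count_gt0 a1. Qed.

Definition propPw w :=
  forall e, matched w e -> ~~ wsink w e -> exists2 f, arc w e f & wsink w f.

Definition unmatched_uncovered w :=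
  forall a b, unmatched w a -> wsink w b -> ~~ covers w b a.

Definition propQw w :=
  [/\ one_two_word w, propPw w & unmatched_uncovered w].

Lemma mem_circ w y : one_two_word w -> (y \in circ w) = matched w y.
Proof.
move=> /one_two_wordP/(_ y) le2.
by rewrite mem_filter mem_count_gt0 /matched; lia.
Qed.

Lemma arc_circ w e f : arc (circ w) e f = arc w e f.
Proof.
rewrite /arc subseq_filter andb_idl // => /arc_count[e2 f2] /=.
by rewrite !andbT; apply/andP; split; apply/eqP; lia.
Qed.

Lemma sink_circ w e : one_two_word w -> sink (circ w) e = wsink w e.
Proof.
move=> o; rewrite /sink /wsink mem_circ //; congr (_ && ~~ _).
by apply/has_arcP/has_arcP => -[f ef]; exists f; rewrite ?arc_circ in ef *.
Qed.

Lemma double_word_circ w : one_two_word w -> double_word (circ w).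
Proof.
move=> o; apply/allP => y; rewrite mem_circ // /matched => /eqP y2.
rewrite count_filter -y2; apply/eqP/eq_count => z /=.
by case: eqP => // ->; rewrite y2.
Qed.

Lemma propP_circE w : one_two_word w -> propP (circ w) <-> propPw w.
Proof.
move=> o; rewrite /propP double_word_circ //=; split.
  move=> /allP dom e m ns; have := dom e; rewrite mem_circ // sink_circ // ns.
  move=> /(_ m) /hasP[f _ /andP[]].
  by rewrite arc_circ sink_circ // => ef sf; exists f.
move=> dom; apply/allP => e; rewrite mem_circ // sink_circ // => m.
apply/implyP => /(dom e m)[f ef sf]; apply/hasP; exists f.
  by rewrite mem_circ //; case/andP: sf.
by rewrite arc_circ sink_circ // ef.
Qed.

Lemma propQE w : propQ w <-> propQw w.
Proof.
split.
  case/and3P=> o /(propP_circE o) dom /allP unc; split=> // a b ua sb.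
  have /unc : a \in w by rewrite mem_count_gt0 (eqP ua).
  rewrite ua => /hasPn/(_ b); rewrite sink_circ // sb; apply.
  by rewrite mem_circ //; case/andP: sb.
case=> o dom unc; apply/and3P; split=> //; first exact/propP_circE.
apply/allP => a _; apply/implyP => ua; apply/hasPn => b _.
rewrite sink_circ //; apply/negP => /andP[sb]; exact/negP/(unc a b ua sb).
Qed.

End Interlacing.

Section UnmatchedLast.
Variables (T : eqType) (v : seq T) (x : T).
Implicit Types (a b e f y : T).
Local Notation W := (rcons v x).
Hypothesis ux : unmatched W x.

Lemma last_notin : x \notin v.
Proof.
by apply/count_memPn; move: ux; rewrite /unmatched -cats1 count_cat /= eqxx; lia.
Qed.

Lemma neq_last y : y \in v -> y != x.
Proof. by move=> yv; apply: contraTneq yv => ->; apply: last_notin. Qed.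

Lemma count_rcons_neq y : y != x -> count_mem y W = count_mem y v.
Proof. by move=> yx; rewrite -cats1 count_cat /= eq_sym (negbTE yx) !addn0. Qed.

Lemma matched_rcons y : matched W y = matched v y.
Proof.
have [->|yx] := eqVneq y x; last by rewrite /matched count_rcons_neq.
by rewrite /matched (eqP ux) (count_memPn last_notin).
Qed.

Lemma arc_rcons e f : arc W e f = arc v e f.
Proof.
apply/idP/idP => [ef|]; last exact/arc_subseq/subseq_rcons.
have [fx|fx] := eqVneq f x.
  by have [_] := arc_count ef; rewrite fx (eqP ux).
by move: ef; rewrite /arc -cats1; apply: (@subseq_cat_dropr _ f [:: e; f; e]); rewrite inE.
Qed.

Lemma wsink_rcons e : wsink W e = wsink v e.
Proof.
apply/wsinkP/wsinkP; rewrite matched_rcons => -[m noarc]; split=> // f.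
  by rewrite -arc_rcons.
by rewrite arc_rcons.
Qed.

Lemma propPw_rcons : propPw W <-> propPw v.
Proof.
split=> dom e.
  rewrite -matched_rcons -wsink_rcons => m ns; have [f] := dom e m ns.
  by rewrite arc_rcons wsink_rcons; exists f.
rewrite matched_rcons wsink_rcons => m ns; have [f] := dom e m ns.
by rewrite -arc_rcons -wsink_rcons; exists f.
Qed.

Lemma propQw_rcons : one_two_word W -> propQw W <-> propQw v.
Proof.
move=> o; split=> -[_ dom unc]; split; try exact/propPw_rcons.
- exact: one_two_word_subseq (subseq_rcons v x) o.
- move=> a b ua sb.
  have ua' : unmatched W a by rewrite /unmatched count_rcons_neq // neq_last // unmatched_mem.
  apply: contra (unc a b ua' _); first exact/covers_subseq/subseq_rcons.
  by rewrite wsink_rcons.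
- exact: o.
- move=> a b ua; rewrite wsink_rcons => sb; apply/negP => ba.
  have {}ba : covers v b a.
    move: ba; rewrite /covers -cats1; apply: (@subseq_cat_dropr _ b [:: b; a]).
    by rewrite inE neq_last ?wsink_mem.
  have ua' : unmatched v a by rewrite /unmatched -count_rcons_neq ?neq_last ?(covers_mem ba).
  by move/negP: (unc a b ua' sb).
Qed.

End UnmatchedLast.

Section MatchedLast.
Variables (T : eqType) (w1 w2 : seq T) (x : T).
Implicit Types (a b e f g y : T).
Local Notation W := (w1 ++ x :: w2 ++ [:: x]).
Hypothesis oW : one_two_word W.

Lemma subseq_w12 : subseq (w1 ++ w2) W.
Proof.
apply: cat_subseq (subseq_refl w1) _; apply: subseq_trans (subseq_cons _ x).
exact: prefix_subseq.
Qed.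

Lemma subseq_w1 : subseq w1 W.
Proof. exact: subseq_trans (prefix_subseq w1 w2) subseq_w12. Qed.

Lemma subseq_w2 : subseq w2 W.
Proof. exact: subseq_trans (suffix_subseq w1 w2) subseq_w12. Qed.

Lemma count_pair_le y : count_mem y w1 + count_mem y w2 <= 2.
Proof.
rewrite -count_cat; exact: leq_trans (leq_count_subseq _ subseq_w12) (one_two_wordP _ oW y).
Qed.

Lemma count_pair y : y != x -> count_mem y W = count_mem y w1 + count_mem y w2.
Proof. by move=> yx; rewrite count_cat /= count_cat /= eq_sym (negbTE yx) !add0n addn0. Qed.

Lemma count_pair_last : count_mem x W = count_mem x w1 + count_mem x w2 + 2.
Proof. by rewrite count_cat /= count_cat /= eqxx; lia. Qed.

Lemma last_notin_w12 : x \notin w1 /\ x \notin w2.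
Proof.
have := one_two_wordP _ oW x; rewrite count_pair_last => le2.
by split; apply/count_memPn; lia.
Qed.

Lemma neq_last_w1 y : y \in w1 -> y != x.
Proof. by move=> y1; apply: contraTneq y1 => ->; case: last_notin_w12. Qed.

Lemma neq_last_w2 y : y \in w2 -> y != x.
Proof. by move=> y2; apply: contraTneq y2 => ->; case: last_notin_w12. Qed.

Lemma matched_last : matched W x.
Proof. by rewrite /matched count_pair_last !(count_memPn _) //; case: last_notin_w12. Qed.

Lemma count_pair_left y : y \notin w2 -> y != x -> count_mem y W = count_mem y w1.
Proof. by move=> /count_memPn y2 yx; rewrite count_pair // y2 addn0. Qed.

Lemma count_pair_right y : y \notin w1 -> y != x -> count_mem y W = count_mem y w2.
Proof. by move=> /count_memPn y1 yx; rewrite count_pair // y1. Qed.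

Lemma matched_w1_notin_w2 y : matched w1 y -> y \notin w2.
Proof. by move=> /eqP y1; apply/count_memPn; have := count_pair_le y; lia. Qed.

Lemma matched_w2_notin_w1 y : matched w2 y -> y \notin w1.
Proof. by move=> /eqP y2; apply/count_memPn; have := count_pair_le y; lia. Qed.

Lemma split_unmatched y : y \in w1 -> y \in w2 -> unmatched w1 y.
Proof. by rewrite !mem_count_gt0 /unmatched => y1 y2; have := count_pair_le y; lia. Qed.

Lemma one_two_word_w1 : one_two_word w1.
Proof. exact: one_two_word_subseq subseq_w1 oW. Qed.

Lemma one_two_word_w2 : one_two_word w2.
Proof. exact: one_two_word_subseq subseq_w2 oW. Qed.

Lemma notin_tail y : y \notin w2 -> y != x -> y \notin x :: w2 ++ [:: x].
Proof. by move=> y2 yx; rewrite !inE mem_cat inE !negb_or y2 yx. Qed.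

Lemma arc_from_last g : ~~ arc W x g.
Proof.
have [x1 x2] := last_notin_w12; apply/negP => xg.
have [gx|gx] := eqVneq g x.
  have := leq_count_subseq (pred1 x) xg; rewrite gx /= eqxx count_pair_last.
  by rewrite !(count_memPn _).
move: xg; rewrite /arc cat_pair_rcons -cats1 => /(@subseq_cat_dropr _ g [:: x; g; x]).
rewrite inE gx => /(_ isT) /(leq_count_subseq (pred1 x)) /=.
by rewrite eqxx (negbTE gx) count_cat /= eqxx !(count_memPn _).
Qed.

Lemma arc_to_last f : f \in w1 -> f \in w2 -> arc W f x.
Proof.
move=> f1 f2; apply: (@cat_subseq _ [:: f]); rewrite ?sub1seq //= eqxx.
by apply: (@cat_subseq _ [:: f]); rewrite ?sub1seq ?inE.
Qed.

Lemma arc_right e f : e \notin w1 -> e != x -> arc W e f -> arc w2 e f.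
Proof.
move=> e1 ex /(subseq_cat_dropl e1) /=; rewrite (negbTE ex).
have [->|fx] := eqVneq f x.
  rewrite -[[:: e; x; e; x]]/([:: e; x; e] ++ [:: x]) subseq_cat2r => /mem_subseq/(_ x).
  by have [_ x2] := last_notin_w12; rewrite !inE eqxx orbT (negbTE x2) => /(_ isT).
by apply: (@subseq_cat_dropr _ f [:: e; f; e]); rewrite inE.
Qed.

Lemma arc_left_covers e f : covers w1 e f -> f \in w2 -> arc W e f.
Proof.
move=> ef f2; apply: (@cat_subseq _ [:: e; f; e] [:: f] w1) => //.
by rewrite sub1seq inE mem_cat f2 orbT.
Qed.

Lemma arc_left e f : e \notin w2 -> e != x -> arc W e f ->
  arc w1 e f \/ covers w1 e f /\ f \in w2.
Proof.
move=> e2 ex ef; have eR := notin_tail e2 ex.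
have ef1 : covers w1 e f.
  apply: (@subseq_cat_dropr _ e [:: e; f]) eR _.
  exact: subseq_trans (prefix_subseq [:: e; f; e] [:: f]) ef.
have [f2|f2] := boolP (f \in w2); [by right | left].
apply: (@subseq_cat_dropr _ f [:: e; f; e]) ef.
exact/notin_tail/neq_last_w1/(covers_mem ef1).
Qed.

Lemma covers_last a : covers W x a = (a \in w2).
Proof.
have [x1 _] := last_notin_w12; apply/idP/idP => [|a2].
  move=> /(subseq_cat_dropl x1) /=; rewrite eqxx.
  by rewrite -[[:: a; x]]/([:: a] ++ [:: x]) subseq_cat2r sub1seq.
apply: (@cat_subseq _ [::]); rewrite ?sub0seq //= eqxx.
by apply: (@cat_subseq _ [:: a]); rewrite ?sub1seq ?inE.
Qed.

Lemma covers_right b a : b \notin w1 -> b != x -> covers W b a -> covers w2 b a.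
Proof.
move=> b1 bx /(subseq_cat_dropl b1) /=; rewrite (negbTE bx).
by apply: (@subseq_cat_dropr _ b [:: b; a]); rewrite inE.
Qed.

Lemma covers_left b a : b \notin w2 -> b != x -> covers W b a -> covers w1 b a.
Proof. by move=> b2 bx; apply: (@subseq_cat_dropr _ b [:: b; a]); apply: notin_tail. Qed.

Lemma wsink_last : wsink W x.
Proof. by apply/wsinkP; split; [exact: matched_last | exact: arc_from_last]. Qed.

Lemma split_not_wsink b : b \in w1 -> b \in w2 -> ~~ wsink W b.
Proof. by move=> b1 b2; apply/wsinkP => -[_ /(_ x)]; rewrite arc_to_last. Qed.

Lemma wsink_right b : b \notin w1 -> b != x -> wsink W b = wsink w2 b.
Proof.
move=> b1 bx; apply/wsinkP/wsinkP; rewrite /matched count_pair_right // => -[m noarc].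
  by split=> // f; apply: contra (noarc f); apply/arc_subseq/subseq_w2.
by split=> // f; apply: contra (noarc f); apply: arc_right.
Qed.

Lemma wsink_left b : b \notin w2 -> b != x ->
  wsink W b = wsink w1 b && ~~ has (covers w1 b) w2.
Proof.
move=> b2 bx; rewrite /wsink /matched count_pair_left // -andbA -negb_or.
congr (_ && ~~ _); apply/has_arcP/orP.
  by case=> f /(arc_left b2 bx) [bf|[bf f2]]; [left; apply/has_arcP | right; apply/hasP]; exists f.
case=> [/has_arcP[f bf]|/hasP[f f2 bf]]; exists f; last exact: arc_left_covers.
exact: arc_subseq subseq_w1 bf.
Qed.

Lemma arc_left_wsink e g : e \notin w2 -> e != x -> arc W e g -> wsink W g ->
  arc w1 e g /\ wsink w1 g.
Proof.
move=> e2 ex eg sg; case: (arc_left e2 ex eg) => [eg1|[/covers_mem g1 g2]]; last first.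
  by rewrite (negbTE (split_not_wsink g1 g2)) in sg.
have [_ mg] := arc_matched one_two_word_w1 eg1.
move: sg; rewrite wsink_left ?matched_w1_notin_w2 ?neq_last_w1 ?matched_mem //.
by case/andP.
Qed.

Lemma wsink_w1_uncovered b : unmatched_uncovered w1 -> wsink w1 b -> wsink W b.
Proof.
move=> unc sb; have [mb _] := andP sb.
rewrite wsink_left ?matched_w1_notin_w2 ?neq_last_w1 ?matched_mem // sb /=.
apply/hasPn => a a2; apply/negP => ba.
by have := unc a b (split_unmatched (covers_mem ba) a2) sb; rewrite ba.
Qed.

Lemma wsink_w1_dominated b : propPw W -> wsink w1 b -> wsink W b.
Proof.
move=> dom sb; have [mb _] := andP sb.
have b2 := matched_w1_notin_w2 mb; have bx := neq_last_w1 (matched_mem mb).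
apply/negPn/negP => nsb.
have [|g bg sg] := dom b _ nsb; first by rewrite /matched count_pair_left.
have [bg1 _] := arc_left_wsink b2 bx bg sg.
by case/wsinkP: sb => _ /(_ g); rewrite bg1.
Qed.

Lemma unmatched_notin_w2 y : unmatched_uncovered W -> unmatched W y -> y \notin w2.
Proof. by move=> unc uy; rewrite -covers_last; apply: unc uy wsink_last. Qed.

Lemma propPw_w2 : propPw W -> propPw w2.
Proof.
move=> dom e m ns; have e1 := matched_w2_notin_w1 m.
have ex := neq_last_w2 (matched_mem m).
rewrite -wsink_right // in ns.
have [|g eg sg] := dom e _ ns; first by rewrite /matched count_pair_right.
have {}eg := arc_right e1 ex eg; have [_ mg] := arc_matched one_two_word_w2 eg.
exists g; rewrite -?wsink_right ?matched_w2_notin_w1 ?neq_last_w2 ?matched_mem //.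
Qed.

Lemma propPw_w1 : propPw W -> propPw w1.
Proof.
move=> dom e m ns; have e2 := matched_w1_notin_w2 m.
have ex := neq_last_w1 (matched_mem m).
have nsW : ~~ wsink W e by rewrite wsink_left // negb_and ns.
have [|g eg sg] := dom e _ nsW; first by rewrite /matched count_pair_left.
by have [eg1 sg1] := arc_left_wsink e2 ex eg sg; exists g.
Qed.

Lemma unmatched_uncovered_w1 :
  propPw W -> unmatched_uncovered W -> unmatched_uncovered w1.
Proof.
move=> dom unc a b ua sb; apply/negP => ba.
have sbW := wsink_w1_dominated dom sb.
have [a2|a2] := boolP (a \in w2).
  by case/wsinkP: sbW => _ /(_ a); rewrite arc_left_covers.
have ax := neq_last_w1 (unmatched_mem ua).
have uaW : unmatched W a by rewrite /unmatched count_pair_left.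
by have := unc a b uaW sbW; rewrite (covers_subseq subseq_w1 ba).
Qed.

Lemma propPw_pair : propPw w2 -> propQw w1 -> propPw W.
Proof.
move=> dom2 [_ dom1 unc1] e m ns.
have [ex|ex] := eqVneq e x; first by rewrite ex wsink_last in ns.
have [e1|e1] := boolP (e \in w1); last first.
  have m2 : matched w2 e by rewrite /matched -count_pair_right.
  rewrite wsink_right // in ns; have [g eg sg] := dom2 e m2 ns.
  have [_ mg] := arc_matched one_two_word_w2 eg.
  exists g; first exact: arc_subseq subseq_w2 eg.
  by rewrite wsink_right ?matched_w2_notin_w1 ?neq_last_w2 ?matched_mem.
have [e2|e2] := boolP (e \in w2); first by exists x; [apply: arc_to_last | apply: wsink_last].
have m1 : matched w1 e by rewrite /matched -count_pair_left.
have [se|nse] := boolP (wsink w1 e).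
  move: ns; rewrite wsink_left // se negbK => /hasP[f f2 ef].
  by have := unc1 f e (split_unmatched (covers_mem ef) f2) se; rewrite ef.
have [g eg sg] := dom1 e m1 nse.
by exists g; [apply: arc_subseq subseq_w1 eg | apply: wsink_w1_uncovered].
Qed.

Lemma unmatched_uncovered_pair : (forall y, unmatched W y -> y \notin w2) ->
  unmatched_uncovered w1 -> unmatched_uncovered W.
Proof.
move=> nw2 unc1 a b ua sb; apply/negP => ba; have a2 := nw2 a ua.
have [bx|bx] := eqVneq b x; first by move: ba; rewrite bx covers_last (negbTE a2).
have [b1|b1] := boolP (b \in w1); last first.
  by move: a2; rewrite (covers_mem (covers_right b1 bx ba)).
have [b2|b2] := boolP (b \in w2); first by rewrite (negbTE (split_not_wsink b1 b2)) in sb.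
have ax : a != x by apply: contraTneq ua => ->; rewrite /unmatched (eqP matched_last).
have ua1 : unmatched w1 a by rewrite /unmatched -count_pair_left.
move: sb; rewrite wsink_left // => /andP[sb1 _].
by have := unc1 a b ua1 sb1; rewrite (covers_left b2 bx ba).
Qed.

Lemma propQw_pair :
  propQw W <-> [/\ forall y, unmatched W y -> y \notin w2, propPw w2 & propQw w1].
Proof.
split=> [[_ dom unc]|[nw2 dom2 [o1 dom1 unc1]]].
  split; [by move=> y; apply: unmatched_notin_w2 | exact: propPw_w2 |].
  by split; [exact: one_two_word_w1 | exact: propPw_w1 | exact: unmatched_uncovered_w1].
by split=> //; [apply: propPw_pair | apply: unmatched_uncovered_pair].
Qed.

Lemma propQ_pair :
  propQ W <-> [/\ forall y, unmatched W y -> y \notin w2, propP (circ w2) & propQ w1].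
Proof.
have domE := propP_circE one_two_word_w2.
split=> [/propQE/propQw_pair[nw2 /domE dom2 /propQE q1] //|[nw2 /domE dom2 /propQE q1]].
by apply/propQE/propQw_pair.
Qed.

End MatchedLast.

Lemma unmatched_last_not_pair (T : eqType) (w w' w1 w2 : seq T) a b :
  w = rcons w' a -> unmatched w a -> w <> w1 ++ b :: w2 ++ [:: b].
Proof.
move=> -> ua E; have [_ ab] := rcons_inj (etrans E (cat_pair_rcons _ _ _)).
by move: ua; rewrite E ab /unmatched count_cat /= count_cat /= eqxx; lia.
Qed.

Lemma pair_unique (T : eqType) (w1 w2 w1' w2' : seq T) a b :
  one_two_word (w1 ++ a :: w2 ++ [:: a]) ->
  w1 ++ a :: w2 ++ [:: a] = w1' ++ b :: w2' ++ [:: b] ->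
  [/\ w1 = w1', a = b & w2 = w2'].
Proof.
move=> o E; have o' := o; rewrite E in o'.
move: E; rewrite !cat_pair_rcons => /rcons_inj[E ab]; subst b.
have [a1 _] := last_notin_w12 o; have [a1' _] := last_notin_w12 o'.
by move/eqP: E; rewrite eqseq_pivot2l // => /andP[/eqP -> /eqP ->].
Qed.

Lemma propQ_decomposition (T : eqType) (w : seq T) : one_two_word w ->
  propQ w <->
  [\/ w = [::], exists w' a, dec2 w w' a | exists w1 a w2, dec3 w w1 a w2].
Proof.
case/lastP: w => [_|v x o]; first by split=> // _; constructor 1.
have rcons_neq0 : rcons v x <> [::] by move/(congr1 size); rewrite size_rcons.
have [ux|mx] := eqVneq (count_mem x (rcons v x)) 1.
  have {}ux : unmatched (rcons v x) x by apply/eqP.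
  have qE : propQ (rcons v x) <-> propQ v.
    by split=> /propQE/(propQw_rcons ux o)/propQE.
  split=> [/qE q|[/rcons_neq0[]|[w' [a [E [_ q]]]]|[w1 [a [w2 [E _]]]]]].
  - by constructor 2; exists v, x; split=> //; split.
  - by case/rcons_inj: E => Ev _; apply/qE; rewrite Ev.
  - by case: (unmatched_last_not_pair (erefl _) ux E).
have xv : x \in v.
  rewrite mem_count_gt0; move: mx (one_two_wordP _ o x).
  by rewrite -cats1 count_cat /= eqxx; lia.
move: o rcons_neq0; case/splitPr: xv => w1 w2; rewrite -cat_pair_rcons => o W_neq0.
split=> [/(propQ_pair o)[nw2 p2 q1]|[/W_neq0[]|[w' [a [E [ua _]]]]|[w1' [a [w2' d]]]]].
- by constructor 3; exists w1, x, w2.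
- by case: (unmatched_last_not_pair E ua (erefl _)).
- have [E [nw2 [p2 q1]]] := d; case: (pair_unique o E) => E1 Ea E2; subst.
  exact/(propQ_pair o).
Qed.

Theorem lemma18 (T : eqType) (w : seq T) :
  one_two_word w ->
  (propQ w <->
     [\/ w = [::],
         (exists w' a, dec2 w w' a) |
         (exists w1 a w2, dec3 w w1 a w2)])
  /\ (w = [::] -> (forall w' a, ~ dec2 w w' a) /\ (forall w1 a w2, ~ dec3 w w1 a w2))
  /\ (forall w' a w1 b w2, dec2 w w' a -> ~ dec3 w w1 b w2)
  /\ (forall w' a w'' b, dec2 w w' a -> dec2 w w'' b -> w' = w'' /\ a = b)
  /\ (forall w1 a w2 w1' b w2', dec3 w w1 a w2 -> dec3 w w1' b w2' ->
        [/\ w1 = w1', a = b & w2 = w2']).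
Proof.
move=> o; split; first exact: propQ_decomposition.
split.
  move=> ->; split=> [w' a [/(congr1 size)]|w1 a w2 [/(congr1 size)]].
    by rewrite size_rcons.
  by rewrite size_cat /= addnS.
split; first by move=> w' a w1 b w2 [E [ua _]] [E' _]; apply: unmatched_last_not_pair E ua E'.
split; first by move=> w' a w'' b [-> _] [/rcons_inj[-> ->] _].
move=> w1 a w2 w1' b w2' [E _] [E' _].
by apply: pair_unique; rewrite -E // -E'.
Qed.
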